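(* Let $\mathcal{B}$ be a real uniform Banach space, $\Omega:\mathcal{B}\to\mathbb{R}$ admissible, $m\in\mathbb{N}$ and $(x_i,y_i)_{i=1}^m\subset\mathcal{B}\times\mathbb{R}$ data for which the constraints $[f,x_i]=y_i$ ($i=1,\dots,m$) can be satisfied. Then there is exactly one solution $f_0$ of the regularised interpolation problem $\min\{\Omega(f): [f,x_i]=y_i\ \forall i\}$ with $f_0^*\in\operatorname{span}\{x_1^*,\dots,x_m^*\}$, and this $f_0$ is the unique minimiser of $\|f\|$ subject to $[f,x_i]=y_i$ for all $i$; in particular it does not depend on the admissible regulariser $\Omega$.
   Context: A real Banach space $\mathcal{B}$ is called uniform if it is uniformly convex and uniformly smooth (equivalently, its norm is uniformly Fréchet differentiable). On such a space there is a unique semi-inner product inducing the norm, i.e. a unique map $[\cdot,\cdot]:\mathcal{B}\times\mathcal{B}\to\mathbb{R}$ that is linear in the first argument, satisfies $[x,x]=\|x\|^2$, $|[x,y]|^2\le[x,x][y,y]$ and $[x,\lambda y]=\lambda[x,y]$ for $\lambda\in\mathbb{R}$; it is given by $[y,x]=\|x\|\lim_{t\to0}\frac{\|x+ty\|-\|x\|}{t}$ for $x\neq0$ (and $[y,0]=0$). The duality map $x\mapsto x^*$, $x^*(y)=[y,x]$, is a (nonlinear in general, but positively and negatively homogeneous) isometric bijection $\mathcal{B}\to\mathcal{B}^*$. Given $m\in\mathbb{N}$ and data $(x_i,y_i)\in\mathcal{B}\times\mathbb{R}$, $i=1,\dots,m$, the regularised interpolation problem is $\min\{\Omega(f): f\in\mathcal{B},\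 [f,x_i]=y_i\ \forall i=1,\dots,m\}$. A function $\Omega:\mathcal{B}\to\mathbb{R}$ is called admissible if for every $m\in\mathbb{N}$ and every data $(x_i,y_i)_{i=1}^m\subset\mathcal{B}\times\mathbb{R}$ for which the constraints $[f,x_i]=y_i$ can be satisfied, the regularised interpolation problem has a minimiser $f_0$ whose dual element satisfies $f_0^*=\sum_{i=1}^m c_i x_i^*$ for some $c_i\in\mathbb{R}$. *)

From Stdlib Require Import Reals Lra ClassicalEpsilon.
Open Scope R_scope.

Record NormedSpace := {
  carrier :> Type;
  vadd : carrier -> carrier -> carrier;
  vscal : R -> carrier -> carrier;
  vzero : carrier;
  vopp : carrier -> carrier;
  vnorm : carrier -> R;
  vadd_assoc : forall u v w, vadd u (vadd v w) = vadd (vadd u v) w;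
  vadd_comm : forall u v, vadd u v = vadd v u;
  vadd_0 : forall u, vadd u vzero = u;
  vadd_opp : forall u, vadd u (vopp u) = vzero;
  vscal_1 : forall u, vscal 1 u = u;
  vscal_assoc : forall a b u, vscal a (vscal b u) = vscal (a * b) u;
  vscal_distr_l : forall a u v, vscal a (vadd u v) = vadd (vscal a u) (vscal a v);
  vscal_distr_r : forall a b u, vscal (a + b) u = vadd (vscal a u) (vscal b u);
  vnorm_eq0 : forall u, vnorm u = 0 -> u = vzero;
  vnorm_homog : forall a u, vnorm (vscal a u) = Rabs a * vnorm u;
  vnorm_triangle : forall u v, vnorm (vadd u v) <= vnorm u + vnorm v
}.

Arguments vadd {n}. Arguments vscal {n}. Arguments vzero {n}.
Arguments vopp {n}. Arguments vnorm {n}.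

Definition vsub {B : NormedSpace} (u v : B) : B := vadd u (vopp v).

Definition complete (B : NormedSpace) : Prop :=
  forall u : nat -> B,
    (forall eps, eps > 0 -> exists N, forall n p, (n >= N)%nat -> (p >= N)%nat ->
        vnorm (vsub (u n) (u p)) < eps) ->
    exists l : B, forall eps, eps > 0 -> exists N, forall n, (n >= N)%nat ->
        vnorm (vsub (u n) l) < eps.

Definition uniformly_convex (B : NormedSpace) : Prop :=
  forall eps, 0 < eps <= 2 -> exists delta, delta > 0 /\
    forall x y : B, vnorm x <= 1 -> vnorm y <= 1 -> vnorm (vsub x y) >= eps ->
      vnorm (vscal (1/2) (vadd x y)) <= 1 - delta.

Definition uniformly_smooth (B : NormedSpace) : Prop :=
  exists D : B -> B -> R, forall eps, eps > 0 -> exists delta, delta > 0 /\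
    forall (x y : B) (t : R), vnorm x = 1 -> vnorm y = 1 -> 0 < Rabs t < delta ->
      Rabs ((vnorm (vadd x (vscal t y)) - vnorm x) / t - D x y) < eps.

Definition uniform (B : NormedSpace) : Prop :=
  complete B /\ uniformly_convex B /\ uniformly_smooth B.

(** The semi-inner product [y, x] = ||x|| lim_{t->0} (||x+ty||-||x||)/t
    (and [y, 0] = 0); the limit is the derivative at 0 of t |-> ||x+ty||. *)
Definition sip {B : NormedSpace} (y x : B) : R :=
  vnorm x * epsilon (inhabits 0)
    (fun l => derivable_pt_lim (fun t => vnorm (vadd x (vscal t y))) 0 l).

Definition dual {B : NormedSpace} (x : B) : B -> R := fun y => sip y x.

Fixpoint rsum (n : nat) (f : nat -> R) : R :=
  match n with O => 0 | S k => rsum k f + f k end.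

Definition interp_constr {B : NormedSpace} (m : nat) (x : nat -> B) (y : nat -> R)
  (f : B) : Prop := forall i, (i < m)%nat -> sip f (x i) = y i.

Definition dual_in_span {B : NormedSpace} (m : nat) (x : nat -> B) (f : B) : Prop :=
  exists c : nat -> R, forall z : B, dual f z = rsum m (fun i => c i * dual (x i) z).

Definition is_minimiser {B : NormedSpace} (F : B -> R) (P : B -> Prop) (f : B) : Prop :=
  P f /\ forall g, P g -> F f <= F g.

Definition admissible (B : NormedSpace) (Omega : B -> R) : Prop :=
  forall (m : nat) (x : nat -> B) (y : nat -> R),
    (exists f, interp_constr m x y f) ->
    exists f0, is_minimiser Omega (interp_constr m x y) f0 /\ dual_in_span m x f0.

(** The dual of a feasible f0 with f0^* in span{x_i^*} takes the same value
    [g, f0] = ||f0||^2 at every feasible g.  Since [g, f0] <= ||f0|| ||g||, f0 has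
    minimal norm; and if ||g|| = ||f0|| as well, then
    [g, f0] <= ||f0|| (||f0 + g|| - ||f0||) forces ||f0 + g|| = 2 ||f0||, which
    uniform convexity allows only for g = f0. *)
From Stdlib Require Import Reals Lra Lia ClassicalEpsilon.
Open Scope R_scope.

Section NormedSpaceFacts.
Variable B : NormedSpace.

Lemma vadd_idem_eq0 (w : B) : vadd w w = w -> w = vzero.
Proof.
  intro H.
  assert (E : vadd (vadd w w) (vopp w) = vadd w (vopp w)) by now rewrite H.
  now rewrite <- vadd_assoc, vadd_opp, vadd_0 in E.
Qed.

Lemma vscal_0 (u : B) : vscal 0 u = vzero.
Proof. apply vadd_idem_eq0. now rewrite <- vscal_distr_r, Rplus_0_l. Qed.

Lemma vscal_vzero (a : R) : vscal a (@vzero B) = vzero.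
Proof. apply vadd_idem_eq0. now rewrite <- vscal_distr_l, vadd_0. Qed.

Lemma vnorm_vzero : vnorm (@vzero B) = 0.
Proof. rewrite <- (vscal_0 vzero), vnorm_homog, Rabs_R0. ring. Qed.

Lemma vopp_scal (u : B) : vopp u = vscal (-1) u.
Proof.
  assert (E : vadd (vscal (-1) u) u = vzero).
  { rewrite <- (vscal_1 B u) at 2. rewrite <- vscal_distr_r.
    replace (-1 + 1) with 0 by ring. apply vscal_0. }
  rewrite <- (vadd_0 B (vscal (-1) u)), <- (vadd_opp B u), vadd_assoc, E,
    vadd_comm, vadd_0. reflexivity.
Qed.

Lemma vnorm_ge0 (u : B) : 0 <= vnorm u.
Proof.
  assert (H := vnorm_triangle B u (vopp u)).
  rewrite vadd_opp, vnorm_vzero, vopp_scal, vnorm_homog, Rabs_left in H by lra. lra.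
Qed.

Lemma vnorm_gt0 (u : B) : vnorm u <> 0 -> 0 < vnorm u.
Proof. generalize (vnorm_ge0 u). lra. Qed.

Lemma vsub_eq0 (u v : B) : vsub u v = vzero -> u = v.
Proof.
  unfold vsub. intro H.
  rewrite <- (vadd_0 B u), <- (vadd_opp B v), (vadd_comm B v (vopp v)), vadd_assoc, H,
    vadd_comm, vadd_0. reflexivity.
Qed.

Lemma vscal_divK (a : R) (u : B) : a <> 0 -> vscal a (vscal (1 / a) u) = u.
Proof.
  intro Ha. rewrite vscal_assoc. replace (a * (1 / a)) with 1 by (field; lra).
  apply vscal_1.
Qed.

Lemma vnorm_normalize (u : B) : 0 < vnorm u -> vnorm (vscal (1 / vnorm u) u) = 1.
Proof.
  intro Hu. rewrite vnorm_homog, Rabs_pos_eq.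
  - field. lra.
  - left. apply Rdiv_lt_0_compat; lra.
Qed.

Lemma vadd_scal_convex (u v : B) (s : R) :
  vadd u (vscal s v) = vadd (vscal (1 - s) u) (vscal s (vadd u v)).
Proof.
  rewrite vscal_distr_l, vadd_assoc, <- vscal_distr_r.
  replace (1 - s + s) with 1 by ring. now rewrite vscal_1.
Qed.

Lemma vadd_scal_self (u : B) (t : R) : vadd u (vscal t u) = vscal (1 + t) u.
Proof. now rewrite vscal_distr_r, vscal_1. Qed.

Lemma vnorm_add_scal_le (u v : B) (h : R) : 0 <= h <= 1 ->
  vnorm (vadd u (vscal h v)) - vnorm u <= h * (vnorm (vadd u v) - vnorm u).
Proof.
  intro Hh. rewrite vadd_scal_convex.
  assert (T := vnorm_triangle B (vscal (1 - h) u) (vscal h (vadd u v))).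
  rewrite !vnorm_homog, (Rabs_pos_eq (1 - h)), (Rabs_pos_eq h) in T by lra.
  lra.
Qed.

Lemma uniformly_convex_mid_eq (UC : uniformly_convex B) (u v : B) :
  vnorm u <= 1 -> vnorm v <= 1 -> 1 <= vnorm (vscal (1 / 2) (vadd u v)) -> u = v.
Proof.
  intros Hu Hv Hmid.
  destruct (Req_dec (vnorm (vsub u v)) 0) as [Z | Z].
  { now apply vsub_eq0, vnorm_eq0. }
  apply vnorm_gt0 in Z.
  destruct (UC (Rmin (vnorm (vsub u v)) 2)) as [d [Hd Hconv]].
  { split; [apply Rmin_glb_lt; lra | apply Rmin_r]. }
  specialize (Hconv u v Hu Hv (Rle_ge _ _ (Rmin_l _ _))). lra.
Qed.

End NormedSpaceFacts.

Lemma derivable_pt_lim_0_le (F : R -> R) (l M : R) : derivable_pt_lim F 0 l ->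
  (forall h, 0 < h <= 1 -> (F h - F 0) / h <= M) -> l <= M.
Proof.
  intros HD HM. destruct (Rle_dec l M) as [| Hlt]; auto. exfalso.
  destruct (HD (l - M)) as [d Hd]; [lra |].
  assert (Hd0 : 0 < d) by apply cond_pos.
  set (h := Rmin (d / 2) 1).
  assert (h0 : 0 < h) by (apply Rmin_glb_lt; lra).
  assert (h1 : h <= 1) by apply Rmin_r.
  assert (h2 : h <= d / 2) by apply Rmin_l.
  specialize (Hd h ltac:(lra)). rewrite Rabs_pos_eq, Rplus_0_l in Hd by lra.
  specialize (Hd ltac:(lra)). specialize (HM h ltac:(lra)).
  apply Rabs_def2 in Hd. lra.
Qed.

Section SemiInnerProduct.
Variable B : NormedSpace.
Hypothesis smooth : uniformly_smooth B.

Definition norm_dir_deriv (x y : B) : R :=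
  epsilon (inhabits 0)
    (fun l => derivable_pt_lim (fun t => vnorm (vadd x (vscal t y))) 0 l).

Lemma sipE (x y : B) : sip y x = vnorm x * norm_dir_deriv x y.
Proof. reflexivity. Qed.

Lemma vnorm_add_scal_rescale (x y : B) (t : R) : 0 < vnorm x -> 0 < vnorm y ->
  vnorm (vadd x (vscal t y)) =
  vnorm x * vnorm (vadd (vscal (1 / vnorm x) x)
                       (vscal (t * (vnorm y / vnorm x)) (vscal (1 / vnorm y) y))).
Proof.
  intros Hx Hy. rewrite <- (Rabs_pos_eq (vnorm x)) at 1 by lra.
  rewrite <- vnorm_homog. f_equal.
  rewrite vscal_distr_l, vscal_divK, !vscal_assoc by lra.
  replace (vnorm x * (t * (vnorm y / vnorm x)) * (1 / vnorm y)) with t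
    by (field; lra).
  reflexivity.
Qed.

(** Uniform smoothness gives the derivative on the unit sphere; homogeneity
    carries it to every x <> 0 and every direction y. *)
Lemma norm_derivable_dir (x y : B) : 0 < vnorm x ->
  exists l, derivable_pt_lim (fun t => vnorm (vadd x (vscal t y))) 0 l.
Proof.
  intro Hx.
  destruct (Req_dec (vnorm y) 0) as [Hy0 | Hy0].
  { apply vnorm_eq0 in Hy0. subst y. exists 0.
    intros eps He. exists (mkposreal 1 Rlt_0_1). intros h Hh _.
    rewrite !vscal_vzero, Rminus_diag, Rdiv_0_l, Rminus_0_r, Rabs_R0. lra. }
  apply vnorm_gt0 in Hy0. rename Hy0 into Hy.
  destruct smooth as [D HD].
  set (u := vscal (1 / vnorm x) x). set (v := vscal (1 / vnorm y) y).
  set (k := vnorm y / vnorm x).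
  assert (Hk : 0 < k) by (apply Rdiv_lt_0_compat; lra).
  assert (Nu : vnorm u = 1) by now apply vnorm_normalize.
  assert (Nv : vnorm v = 1) by now apply vnorm_normalize.
  exists (vnorm y * D u v). intros eps He.
  destruct (HD (eps / vnorm y)) as [d [Hd HDd]].
  { apply Rdiv_lt_0_compat; lra. }
  assert (Hdk : 0 < d / k) by (apply Rdiv_lt_0_compat; lra).
  exists (mkposreal (d / k) Hdk). intros h Hh Hhd. simpl in Hhd.
  rewrite Rplus_0_l, vscal_0, vadd_0, vnorm_add_scal_rescale by lra. fold u v k.
  assert (Hhk : 0 < Rabs (h * k) < d).
  { rewrite Rabs_mult, (Rabs_pos_eq k) by lra. split.
    - apply Rmult_lt_0_compat; [apply Rabs_pos_lt |]; lra.
    - apply (Rmult_lt_compat_r k) in Hhd; [| lra].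
      replace (d / k * k) with d in Hhd by (field; lra). lra. }
  specialize (HDd u v (h * k) Nu Nv Hhk). rewrite Nu in HDd.
  set (Q := vnorm (vadd u (vscal (h * k) v))) in *.
  replace ((vnorm x * Q - vnorm x) / h - vnorm y * D u v)
    with (vnorm y * ((Q - 1) / (h * k) - D u v)) by (unfold k; field; lra).
  rewrite Rabs_mult, (Rabs_pos_eq (vnorm y)) by lra.
  replace eps with (vnorm y * (eps / vnorm y)) by (field; lra).
  apply Rmult_lt_compat_l; lra.
Qed.

Lemma norm_dir_derivP (x y : B) : 0 < vnorm x ->
  derivable_pt_lim (fun t => vnorm (vadd x (vscal t y))) 0 (norm_dir_deriv x y).
Proof. intro Hx. unfold norm_dir_deriv. apply epsilon_spec, norm_derivable_dir, Hx. Qed.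

Lemma sip_le_norm_add (x y : B) : sip y x <= vnorm x * (vnorm (vadd x y) - vnorm x).
Proof.
  rewrite sipE.
  destruct (Req_dec (vnorm x) 0) as [H0 | H0]; [rewrite H0; lra |].
  apply vnorm_gt0 in H0.
  apply Rmult_le_compat_l; [lra |].
  apply (derivable_pt_lim_0_le _ _ _ (norm_dir_derivP x y H0)).
  intros h Hh. rewrite vscal_0, vadd_0.
  apply (Rmult_le_reg_r h); [lra |]. unfold Rdiv.
  rewrite Rmult_assoc, Rinv_l, Rmult_1_r by lra.
  rewrite (Rmult_comm _ h). apply vnorm_add_scal_le. lra.
Qed.

Lemma sip_le (x y : B) : sip y x <= vnorm x * vnorm y.
Proof.
  apply (Rle_trans _ _ _ (sip_le_norm_add x y)).
  apply Rmult_le_compat_l; [apply vnorm_ge0 |].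
  generalize (vnorm_triangle B x y). lra.
Qed.

Lemma sip_self (x : B) : sip x x = vnorm x * vnorm x.
Proof.
  rewrite sipE.
  destruct (Req_dec (vnorm x) 0) as [H0 | H0]; [rewrite H0; lra |].
  apply vnorm_gt0 in H0. f_equal.
  apply (uniqueness_limite _ 0 _ _ (norm_dir_derivP x x H0)).
  intros eps He. exists (mkposreal 1 Rlt_0_1). intros h Hh Hd. simpl in Hd.
  apply Rabs_def2 in Hd.
  rewrite Rplus_0_l, vscal_0, vadd_0, vadd_scal_self, vnorm_homog, (Rabs_pos_eq (1 + h))
    by lra.
  replace (((1 + h) * vnorm x - vnorm x) / h - vnorm x) with 0 by (field; lra).
  rewrite Rabs_R0. lra.
Qed.

Lemma vnorm_le_of_sip (f g : B) : sip g f = vnorm f * vnorm f -> vnorm f <= vnorm g.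
Proof.
  intro E. assert (L := sip_le f g). rewrite E in L.
  destruct (Req_dec (vnorm f) 0) as [H0 | H0]; [rewrite H0; apply vnorm_ge0 |].
  apply vnorm_gt0 in H0. apply (Rmult_le_reg_l (vnorm f)); lra.
Qed.

Lemma eq_of_sip_vnorm (UC : uniformly_convex B) (f g : B) :
  sip g f = vnorm f * vnorm f -> vnorm g <= vnorm f -> g = f.
Proof.
  intros E Hle.
  assert (Hgf : vnorm g = vnorm f) by (generalize (vnorm_le_of_sip f g E); lra).
  destruct (Req_dec (vnorm f) 0) as [H0 | H0].
  { rewrite (vnorm_eq0 B g), (vnorm_eq0 B f) by lra. reflexivity. }
  apply vnorm_gt0 in H0.
  assert (Nf := vnorm_normalize B f H0).
  assert (Ng := vnorm_normalize B g ltac:(lra)). rewrite Hgf in Ng.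
  set (r := vnorm f) in *.
  assert (Hsum : 2 * r <= vnorm (vadd f g)).
  { generalize (sip_le_norm_add f g). fold r. rewrite E. intro L.
    apply Rmult_le_reg_l in L; lra. }
  assert (Huv : vscal (1 / r) f = vscal (1 / r) g).
  { apply (uniformly_convex_mid_eq B UC).
    - lra.
    - lra.
    - rewrite <- vscal_distr_l, vscal_assoc, vnorm_homog, Rabs_pos_eq.
      + apply (Rmult_le_reg_l (2 * r)); [lra |].
        replace (2 * r * (1 / 2 * (1 / r) * vnorm (vadd f g))) with (vnorm (vadd f g))
          by (field; lra). lra.
      + left. apply Rmult_lt_0_compat; [lra | apply Rdiv_lt_0_compat; lra]. }
  rewrite <- (vscal_divK B r g), <- Huv, vscal_divK by lra. reflexivity.
Qed.

End SemiInnerProduct.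

Lemma rsum_ext (n : nat) (f g : nat -> R) :
  (forall i, (i < n)%nat -> f i = g i) -> rsum n f = rsum n g.
Proof.
  induction n as [| n IH]; simpl; intro H; auto.
  rewrite IH, H; [reflexivity | lia | intros i Hi; apply H; lia].
Qed.

Lemma sip_interp_dual_in_span (B : NormedSpace) (smooth : uniformly_smooth B)
  (m : nat) (x : nat -> B) (y : nat -> R) (f g : B) :
  interp_constr m x y f -> dual_in_span m x f -> interp_constr m x y g ->
  sip g f = vnorm f * vnorm f.
Proof.
  intros Hf [c Hc] Hg.
  assert (Ef := Hc f). assert (Eg := Hc g). unfold dual in Ef, Eg.
  rewrite sip_self in Ef by exact smooth.
  rewrite Eg, Ef. apply rsum_ext. intros i Hi. now rewrite Hf, Hg.
Qed.

Theorem mainTheorem5 (B : NormedSpace) (HB : uniform B) (Omega : B -> R)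
  (HO : admissible B Omega) (m : nat) (x : nat -> B) (y : nat -> R)
  (Hfeas : exists f, interp_constr m x y f) :
  exists f0 : B,
    (is_minimiser Omega (interp_constr m x y) f0 /\ dual_in_span m x f0) /\
    (forall g : B, is_minimiser Omega (interp_constr m x y) g /\ dual_in_span m x g ->
       g = f0) /\
    is_minimiser vnorm (interp_constr m x y) f0 /\
    (forall g : B, is_minimiser vnorm (interp_constr m x y) g -> g = f0).
Proof.
  destruct HB as [_ [convex smooth]].
  destruct (HO m x y Hfeas) as [f0 [[Hf0 HOmin] Hspan]].
  assert (Hsip : forall g, interp_constr m x y g -> sip g f0 = vnorm f0 * vnorm f0)
    by (intros g Hg; exact (sip_interp_dual_in_span B smooth m x y f0 g Hf0 Hspan Hg)).
  assert (Hmin : forall g, interp_constr m x y g -> vnorm f0 <= vnorm g)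
    by (intros g Hg; exact (vnorm_le_of_sip B smooth f0 g (Hsip g Hg))).
  exists f0. repeat split; auto.
  - intros g [[Hg _] Hgspan]. symmetry.
    apply (eq_of_sip_vnorm B smooth convex g f0); [| exact (Hmin g Hg)].
    exact (sip_interp_dual_in_span B smooth m x y g f0 Hg Hgspan Hf0).
  - intros g [Hg Hgmin].
    exact (eq_of_sip_vnorm B smooth convex f0 g (Hsip g Hg) (Hgmin f0 Hf0)).
Qed.
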